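(* Let $\vec B=(b_0,\dots,b_{N-1})$ be a binary digit vector of length $N$ (scale factor $N$). Then $\vec B$ is uniquely determined by the values $\{F_{\vec B}(k/N)\}_{k=1}^{N-1}$; i.e., if $\vec B,\vec C$ are binary digit vectors both of length $N$ with $F_{\vec B}(k/N)=F_{\vec C}(k/N)$ for $k=1,\dots,N-1$, then $\vec B=\vec C$.
   Context: A binary digit vector of length (scale factor) $N\ge3$ is $\vec B=(b_0,\dots,b_{N-1})\in\{0,1\}^N$ with $2\le\|\vec B\|:=\sum_i b_i\le N-1$; its digit set is $D=\{i:b_i=1\}$. With $\phi_d(x)=(x+d)/N$ for $d\in D$, let $\mu_{\vec B}$ be the unique Borel probability measure with $\mu_{\vec B}=\frac{1}{\|\vec B\|}\sum_{d\in D}\mu_{\vec B}\circ\phi_d^{-1}$, supported on the attractor $C_{\vec B}\subset[0,1]$. The CDF is $F_{\vec B}(x)=\mu_{\vec B}([0,x])$, $x\in[0,1]$. *)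

From HB Require Import structures.
From mathcomp Require Import all_boot all_order all_algebra.
From mathcomp Require Import all_classical all_reals all_analysis.
Set Implicit Arguments. Unset Strict Implicit. Unset Printing Implicit Defensive.
Import Order.TTheory GRing.Theory Num.Theory.
Local Open Scope classical_set_scope.
Local Open Scope ring_scope.

(* A binary digit vector of length N is B : {ffun 'I_N -> bool};
   b_i = 1 iff B i = true.  Its digit set is D = [set i | B i]. *)
Definition digit_norm (N : nat) (B : {ffun 'I_N -> bool}) : nat :=
  #|[set i | B i]|.

Definition is_digit_vector (N : nat) (B : {ffun 'I_N -> bool}) : bool :=
  [&& 3 <= N, 2 <= digit_norm B & digit_norm B <= N.-1]%N.

Definition phi (R : realType) (N d : nat) (x : R) : R := (x + d%:R) / N%:R.

Definition self_similar (R : realType) (N : nat) (B : {ffun 'I_N -> bool})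
  (mu : probability R R) : Prop :=
  forall A : set R, measurable A ->
    mu A = (((digit_norm B)%:R^-1)%:E *
           \sum_(d < N | B d) mu (phi N d @^-1` A))%E.

Definition cdf_mu (R : realType) (mu : probability R R) (x : R) : \bar R :=
  mu `[0, x]%classic.

From HB Require Import structures.
From mathcomp Require Import all_boot all_order all_algebra.
From mathcomp Require Import all_classical all_reals all_analysis.
From mathcomp Require Import lra zify measurable_realfun.
Set Implicit Arguments. Unset Strict Implicit. Unset Printing Implicit Defensive.
Import Order.TTheory GRing.Theory Num.Theory.
Local Open Scope classical_set_scope.
Local Open Scope ring_scope.

(* The self-similar measure mu sits on [0, 1] and has no atom at 0: the mass of
   a ray beyond [0, 1] is the mean of the masses of rays pushed N times
   further out, so it is bounded by masses that tend to 0; and the atom at 0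
   is the mean of itself (for the digit 0) and of null masses (for the other
   digits).  Hence self-similarity evaluates F exactly on the grid: F (k/N) is
   the proportion of digits below k, so F ((i+1)/N) <> F (i/N) exactly when i
   is a digit, and the grid values of F determine the digit set. *)

Definition mean (R : numFieldType) (I : finType) (D : {set I}) (t : I -> R) : R :=
  #|D|%:R^-1 * \sum_(i in D) t i.

Section mean.
Variables (R : numFieldType) (I : finType) (D : {set I}).
Implicit Types (t s : I -> R) (c : R).

Lemma mean_cst c : (0 < #|D|)%N -> mean D (fun=> c) = c.
Proof.
by move=> D0; rewrite /mean sumr_const -[c *+ _]mulr_natl mulKf // pnatr_eq0 -lt0n.
Qed.

Lemma ler_mean t s : {in D, forall i, t i <= s i} -> mean D t <= mean D s.
Proof. by move=> ts; rewrite ler_wpM2l ?invr_ge0 ?ler0n // ler_sum. Qed.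

Lemma mean_sub t s : mean D (fun i => t i - s i) = mean D t - mean D s.
Proof. by rewrite /mean sumrB mulrBr. Qed.

Lemma mean_indicator (j : I) :
  mean D (fun i => (i == j)%:R) = #|D|%:R^-1 * (j \in D)%:R :> R.
Proof.
congr (_ * _); have [jD|jD] := boolP (j \in D).
  by rewrite (bigD1 j) //= eqxx big1 ?addr0 // => i /andP[_ /negPf ->].
by rewrite big1 // => i iD; case: eqP iD jD => // -> ->.
Qed.

Lemma mean_ub_eq t :
  {in D, forall i, t i <= mean D t} -> {in D, forall i, t i = mean D t}.
Proof.
move=> le_t i iD; have D0 : (0 < #|D|)%N by apply/card_gt0P; exists i.
have : mean D (fun j => mean D t - t j) = 0 by rewrite mean_sub mean_cst ?subrr.
rewrite {1}/mean => /eqP; rewrite mulf_eq0 invr_eq0 pnatr_eq0 eqn0Ngt D0 => /eqP sum0.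
have ge0 j : j \in D -> 0 <= mean D t - t j by rewrite subr_ge0 => /le_t.
by apply/eqP; rewrite eq_sym -subr_eq0 (psumr_eq0P ge0 sum0).
Qed.
End mean.

Lemma mean_recursion_le0 (R : realFieldType) (I : finType) (D : {set I}) (N : nat)
    (c : I -> R) (g : R -> R) :
  (1 < N)%N -> {homo g : x y /~ x <= y} ->
  {in D, forall i, c i <= N%:R - 1} -> (exists2 i, i \in D & c i <= N%:R - 2) ->
  (forall a, g a = mean D (fun i => g (N%:R * a - c i))) ->
  (forall x, (forall m : nat, x <= g m%:R) -> x <= 0) ->
  g 1 <= 0.
Proof.
move=> N1 g_dec c_ub [i0 i0D ci0] g_rec g_inf.
have D0 : (0 < #|D|)%N by apply/card_gt0P; exists i0.
have g_step a : g a <= g (N%:R * a - N%:R + 1).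
  rewrite {1}g_rec -[leRHS](mean_cst _ D0); apply: ler_mean => i /c_ub ci.
  by apply: g_dec; lra.
have g_pow k : g 2 <= g (1 + (N ^ k)%:R).
  elim: k => [|k IHk]; first by rewrite expn0.
  apply: (le_trans IHk); apply: (le_trans (g_step _)).
  by rewrite expnS natrM [X in g X <= _](_ : _ = 1 + (N%:R * (N ^ k)%:R)) //; lra.
have g2 : g 2 <= 0.
  apply: g_inf => m; apply: (le_trans (g_pow m)); apply: g_dec.
  have : (m < N ^ m)%N by exact: ltn_expl.
  by rewrite -(ltr_nat R); lra.
(* g 1 is a mean of values g (N - c i) <= g 1, so they all equal g 1; the one
   with c i <= N - 2 is at most g 2. *)
have g1_ub : {in D, forall i, g (N%:R * 1 - c i) <= g 1}.
  by move=> i /c_ub ci; apply: g_dec; lra.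
have := mean_ub_eq (D := D) (t := fun i => g (N%:R * 1 - c i)).
rewrite -g_rec => /(_ g1_ub i0 i0D) <-; apply: le_trans g2; apply: g_dec; lra.
Qed.

Lemma probability_nonincreasing_lb_le0 (d : measure_display) (T : measurableType d)
    (R : realType) (mu : probability T R) (F : nat -> set T) (x : R) :
  (forall m, measurable (F m)) -> (forall n m, (n <= m)%N -> F m `<=` F n) ->
  \bigcap_m F m = set0 -> (forall m, x <= fine (mu (F m))) -> x <= 0.
Proof.
move=> mF F_dec F_cap0 x_lb.
have : mu \o F @ \oo --> mu (\bigcap_m F m).
  apply: nonincreasing_cvg_mu => //; last by move=> n m /F_dec/subsetPset.
    exact: le_lt_trans (probability_le1 mu (mF 0%N)) (ltry _).
  by rewrite F_cap0.
rewrite F_cap0 measure0 => mF0.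
have : (x%:E <= lim (mu \o F @ \oo))%E.
  apply: lime_ge; first by apply/cvg_ex; exists 0%E.
  by apply: nearW => m /=; rewrite -[mu (F m)]fineK ?fin_num_measure ?lee_fin.
by rewrite (cvg_lim _ mF0) // lee_fin.
Qed.

Definition digits (N : nat) (B : {ffun 'I_N -> bool}) : {set 'I_N} :=
  [set i | B i]%SET.

Lemma digit_norm_digits (N : nat) (B : {ffun 'I_N -> bool}) :
  digit_norm B = #|digits B|.
Proof. by apply: eq_card => i; rewrite inE; apply/idP/idP => [/set_mem | /mem_set]. Qed.

Lemma digits_neq (N : nat) (B : {ffun 'I_N -> bool}) (j : nat) :
  is_digit_vector B -> exists2 d : 'I_N, B d & d != j :> nat.
Proof.
case/and3P => _; rewrite digit_norm_digits => /card_gt1P[d1 [d2 [d1B d2B d12]]] _.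
rewrite !inE in d1B d2B; have [d1j|] := eqVneq (d1 : nat) j; last by exists d1.
by exists d2 => //; rewrite -d1j; apply: contraNneq d12 => /val_inj ->.
Qed.

Lemma fine_probability_le (d : measure_display) (T : measurableType d) (R : realType)
    (mu : probability T R) (A B : set T) :
  measurable A -> measurable B -> A `<=` B -> fine (mu A) <= fine (mu B).
Proof.
move=> mA mB AB; rewrite fine_le ?fin_num_measure //.
by apply: le_measure; rewrite ?inE.
Qed.

Lemma probability_fine_le0 (d : measure_display) (T : measurableType d) (R : realType)
    (mu : probability T R) (A : set T) :
  measurable A -> fine (mu A) <= 0 -> mu A = 0%E.
Proof.
move=> mA muA_le0; rewrite -[mu A]fineK ?fin_num_measure //.
by congr (_%:E); apply/eqP; rewrite eq_le muA_le0 fine_ge0.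
Qed.

Lemma measurable_phi_preimage (R : realType) (N d : nat) (A : set R) :
  measurable A -> measurable (phi N d @^-1` A).
Proof.
have mphi : measurable_fun setT (phi N d : R -> R).
  by apply: measurable_funM => //; apply: measurable_funD.
by move=> mA; rewrite -[_ @^-1` _]setTI; exact: mphi.
Qed.

Section self_similar_measure.
Variables (R : realType) (N : nat) (B : {ffun 'I_N -> bool}) (mu : probability R R).
Hypotheses (B_digit : is_digit_vector B) (mu_ss : self_similar B mu).

Let N_gt2 : (2 < N)%N. Proof. by case/and3P: B_digit. Qed.
Let N_gt0 : 0 < N%:R :> R. Proof. by rewrite ltr0n; lia. Qed.
Let digits_gt0 : (0 < #|digits B|)%N.
Proof. by case/and3P: B_digit => _ /ltnW; rewrite digit_norm_digits. Qed.

Lemma self_similar_mean A : measurable A ->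
  mu A = (mean (digits B) (fun d => fine (mu (phi N d @^-1` A))))%:E.
Proof.
move=> mA; rewrite mu_ss // /mean digit_norm_digits EFinM -sumEFin.
congr (_ * _)%E; apply: eq_big => [d|d _]; first by rewrite inE.
by rewrite fineK ?fin_num_measure //; apply: measurable_phi_preimage.
Qed.

Lemma mu_itv_gt1 : mu `]1, +oo[%classic = 0%E.
Proof.
apply: probability_fine_le0; first exact: measurable_itv.
pose g a := fine (mu `]a, +oo[%classic).
apply: (@mean_recursion_le0 _ _ (digits B) N (fun d => d%:R) g).
- by lia.
- move=> a b ab; apply: fine_probability_le => // x /=.
  by rewrite !in_itv /= !andbT; exact: le_lt_trans.
- by move=> d _; have := ltn_ord d; rewrite -(ler_nat R) -natr1; lra.
- have [d dB dN] := digits_neq N.-1 B_digit.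
  exists d; first by rewrite inE.
  have : (d.+2 <= N)%N by have := ltn_ord d; lia.
  by rewrite -(ler_nat R) -!natr1; lra.
- move=> a; rewrite {1}/g self_similar_mean; last exact: measurable_itv.
  congr mean; apply/funext => d /=; rewrite /g; congr (fine (mu _)).
  by apply/seteqP; split => x /=; rewrite /phi !in_itv /= !andbT ltr_pdivlMr //; lra.
- move=> x x_lb.
  apply: (probability_nonincreasing_lb_le0 (mu := mu)
    (F := fun m => `]m%:R, +oo[%classic)).
  + by move=> m; exact: measurable_itv.
  + move=> n m nm y /=; rewrite !in_itv /= !andbT; apply: le_lt_trans.
    by rewrite ler_nat.
  + rewrite predeqE => y; split => // /(_ (Num.Def.archi_bound `|y|) I) /=.
    rewrite in_itv /= andbT; have := archi_boundP (normr_ge0 y).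
    have := ler_norm y; lra.
  + exact: x_lb.
Qed.

Lemma mu_itv_lt0 : mu `]-oo, 0[%classic = 0%E.
Proof.
apply: probability_fine_le0; first exact: measurable_itv.
(* Under x |-> 1 - x the left ray becomes a right ray and the digit d becomes
   N - 1 - d. *)
pose g a := fine (mu `]-oo, 1 - a[%classic).
suff : g 1 <= 0 by rewrite /g subrr.
apply: (@mean_recursion_le0 _ _ (digits B) N (fun d => N%:R - 1 - d%:R) g).
- by lia.
- move=> a b ab; apply: fine_probability_le => // x /=.
  by rewrite !in_itv /= => /lt_le_trans; apply; lra.
- by move=> d _; rewrite lerBlDr lerDl.
- have [d dB d0] := digits_neq 0 B_digit.
  exists d; first by rewrite inE.
  have : (1 <= d)%N by lia.
  by rewrite -(ler_nat R); lra.
- move=> a; rewrite {1}/g self_similar_mean; last exact: measurable_itv.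
  congr mean; apply/funext => d /=; rewrite /g; congr (fine (mu _)).
  by apply/seteqP; split => x /=; rewrite /phi !in_itv /= ltr_pdivrMr //; lra.
- move=> x x_lb.
  apply: (probability_nonincreasing_lb_le0 (mu := mu)
    (F := fun m => `]-oo, 1 - m%:R[%classic)).
  + by move=> m; exact: measurable_itv.
  + move=> n m nm y /=; rewrite !in_itv /= => /lt_le_trans; apply.
    by rewrite lerD2l lerN2 ler_nat.
  + rewrite predeqE => y; split => // /(_ (Num.Def.archi_bound (`|y| + 1)) I) /=.
    rewrite in_itv /=; have := archi_boundP (addr_ge0 (normr_ge0 y) ler01).
    have := ler_norm (- y); rewrite normrN; lra.
  + exact: x_lb.
Qed.

Lemma mu_itv01 : mu `[0, 1]%classic = 1%E.
Proof.
have m01 : measurable (`[0, 1]%classic : set R) by exact: measurable_itv.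
suff null_C : mu (~` `[0, 1]%classic) = 0%E.
  rewrite -[`[0, 1]%classic]setCK probability_setC ?null_C ?sube0 //.
  exact: measurableC.
have null_out : mu (`]-oo, 0[%classic `|` `]1, +oo[%classic : set R) = 0%E.
  by apply: null_set_setU; [exact: measurable_itv | exact: measurable_itv | |];
    [exact: mu_itv_lt0 | exact: mu_itv_gt1].
apply/eqP; rewrite eq_le measure_ge0 andbT -null_out le_measure ?inE //.
- exact: measurableC.
- by apply: measurableU; exact: measurable_itv.
- move=> x /=; rewrite !in_itv /= andbT => /negP; rewrite negb_and -!ltNge.
  by case/orP; [left | right].
Qed.

Lemma mu_point0 : mu [set 0] = 0%E.
Proof.
apply: probability_fine_le0; first exact: measurable_set1.
pose t (d : 'I_N) := fine (mu [set - d%:R]).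
have p_mean : fine (mu [set 0]) = mean (digits B) t.
  rewrite self_similar_mean /=; last exact: measurable_set1.
  congr mean; apply/funext => d; congr (fine (mu _)).
  apply/seteqP; split => x /=; rewrite /phi.
    by move/eqP; rewrite mulf_eq0 invr_eq0 (gt_eqF N_gt0) orbF addr_eq0 => /eqP.
  by move=> ->; rewrite addNr mul0r.
have t_le0 (d : 'I_N) : (0 < d)%N -> t d <= 0.
  move=> d_gt0; have <- : fine (mu `]-oo, 0[%classic) = 0 by rewrite mu_itv_lt0.
  apply: fine_probability_le; [exact: measurable_set1 | exact: measurable_itv |].
  by move=> _ ->; rewrite /= in_itv /= oppr_lt0 ltr0n.
have t_ub : {in digits B, forall d, t d <= mean (digits B) t}.
  move=> d _; rewrite -p_mean /t; have [->|d_gt0] := posnP d; first by rewrite oppr0.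
  by apply: le_trans (t_le0 _ d_gt0) _; rewrite fine_ge0.
have [d dB d_neq0] := digits_neq 0 B_digit.
have dD : d \in digits B by rewrite inE.
by rewrite p_mean -(mean_ub_eq t_ub dD) t_le0 // lt0n.
Qed.

Lemma mu_itv_le0 : mu `]-oo, 0]%classic = 0%E.
Proof.
have -> : `]-oo, 0]%classic = `]-oo, 0[%classic `|` [set 0 : R].
  apply/seteqP; split => x /=; rewrite !in_itv /=.
    by rewrite le_eqVlt => /orP[/eqP|]; [right | left].
  by case=> [/ltW | ->].
by apply: null_set_setU; [exact: measurable_itv | exact: measurable_set1 | |];
  [exact: mu_itv_lt0 | exact: mu_point0].
Qed.

Lemma mu_phi_preimage_grid (k : nat) (d : 'I_N) :
  mu (phi N d @^-1` `[0, k%:R / N%:R]%classic) = ((d < k)%N)%:R%:E.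
Proof.
have N_inv_gt0 : 0 < N%:R^-1 :> R by rewrite invr_gt0.
have mpre : measurable (phi N d @^-1` `[0, k%:R / N%:R]%classic : set R).
  by apply: measurable_phi_preimage; exact: measurable_itv.
have preE : phi N d @^-1` `[0, k%:R / N%:R]%classic =
    [set x : R | - d%:R <= x <= k%:R - d%:R].
  apply/seteqP; split => x /=; rewrite /phi in_itv /= pmulr_lge0 // ler_pM2r //;
    by move=> /andP[? ?]; apply/andP; split; lra.
rewrite preE in mpre *.
case: ltnP => [lt_dk|le_kd].
- apply/eqP; rewrite eq_le probability_le1 //= -mu_itv01 le_measure ?inE //.
  move=> x /=; rewrite in_itv /= => /andP[x_ge0 x_le1].
  have : d%:R + 1 <= k%:R :> R by rewrite natr1 ler_nat.
  by have := ler0n R d => ? ?; apply/andP; split; lra.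
- apply/eqP; rewrite eq_le measure_ge0 andbT -[(false%:R)%:E]/0%E -mu_itv_le0.
  rewrite le_measure ?inE //.
  move=> x /=; rewrite in_itv /= => /andP[_ x_le].
  have : k%:R <= d%:R :> R by rewrite ler_nat.
  lra.
Qed.

Lemma cdf_grid (k : nat) :
  cdf_mu mu (k%:R / N%:R) = (mean (digits B) (fun d => ((d < k)%N)%:R))%:E.
Proof.
rewrite /cdf_mu self_similar_mean; last exact: measurable_itv.
by congr (mean _ _)%:E; apply/funext => d; rewrite mu_phi_preimage_grid.
Qed.

Lemma cdf_grid0 : cdf_mu mu (0%:R / N%:R) = 0%E.
Proof. by rewrite cdf_grid (_ : (fun d : 'I_N => _) = fun=> 0) ?mean_cst. Qed.

Lemma cdf_gridN : cdf_mu mu (N%:R / N%:R) = 1%E.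
Proof.
rewrite cdf_grid (_ : (fun d : 'I_N => _) = fun=> 1) ?mean_cst //.
by apply/funext => d; rewrite ltn_ord.
Qed.

Lemma cdf_grid_jump (i : 'I_N) :
  B i = (cdf_mu mu (i.+1%:R / N%:R) != cdf_mu mu (i%:R / N%:R)).
Proof.
rewrite !cdf_grid eqe -subr_eq0 -mean_sub.
have -> : (fun d : 'I_N => ((d < i.+1)%N)%:R - ((d < i)%N)%:R) =
    (fun d => (d == i)%:R :> R).
  apply/funext => d; rewrite -val_eqE /= ltnS leq_eqVlt.
  by case: ltngtP; rewrite ?subr0 ?subrr.
rewrite mean_indicator mulf_eq0 negb_or invr_eq0 pnatr_eq0 -lt0n digits_gt0 inE /=.
by rewrite pnatr_eq0 eqb0 negbK.
Qed.
End self_similar_measure.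

Theorem theorem2p1 (R : realType) (N : nat) (B C : {ffun 'I_N -> bool})
  (muB muC : probability R R) :
  is_digit_vector B -> is_digit_vector C ->
  self_similar B muB -> self_similar C muC ->
  (forall k : nat, (1 <= k <= N.-1)%N ->
     cdf_mu muB (k%:R / N%:R) = cdf_mu muC (k%:R / N%:R)) ->
  B = C.
Proof.
move=> B_digit C_digit muB_ss muC_ss eq_cdf.
have eq_cdf_grid k :
    (k <= N)%N -> cdf_mu muB (k%:R / N%:R) = cdf_mu muC (k%:R / N%:R).
  move=> le_kN; have [->|k_gt0] := posnP k.
    by rewrite (cdf_grid0 B_digit muB_ss) (cdf_grid0 C_digit muC_ss).
  have [->|ne_kN] := eqVneq k N.
    by rewrite (cdf_gridN B_digit muB_ss) (cdf_gridN C_digit muC_ss).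
  by apply: eq_cdf; lia.
apply/ffunP => i; rewrite (cdf_grid_jump B_digit muB_ss) (cdf_grid_jump C_digit muC_ss).
by rewrite !eq_cdf_grid // ltnW.
Qed.
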